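(* If $m$ and $n$ are non-negative integers, then $$\sum_{k = 1}^n \sum_{j = 0}^{k - 1} \frac{( n - j)!}{k - j}\binom{n}{j}\left\{ {m \atop n - j} \right\} = n^m H_n - \sum_{k = 1}^n \frac{( n - k)^m }{k} .$$
   Context: $\left\{ {m \atop p} \right\}$ denotes the Stirling number of the second kind; $H_n=\sum_{i=1}^n\frac1i$; the convention $0^0=1$ is used. Empty sums are zero. *)

From mathcomp Require Import all_boot all_order all_algebra.
Set Implicit Arguments. Unset Strict Implicit. Unset Printing Implicit Defensive.
Import GRing.Theory Num.Theory.

Fixpoint stirling2 (m p : nat) : nat :=
  match m, p with
  | 0, 0 => 1
  | 0, _.+1 => 0
  | _.+1, 0 => 0
  | m'.+1, p'.+1 => p'.+1 * stirling2 m' p'.+1 + stirling2 m' p'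
  end.

Local Open Scope ring_scope.

Definition harmonic (n : nat) : rat := \sum_(1 <= i < n.+1) (i%:R)^-1.

From mathcomp Require Import all_boot all_order all_algebra.
From mathcomp Require Import ring.
Import GRing.Theory Num.Theory.

Set Implicit Arguments.
Unset Strict Implicit.
Unset Printing Implicit Defensive.

(* Writing x ^ m = sum_p S(m, p) x^_p (Stirling expansion in falling factorials)
   reduces both sides to sums over p of S(m, p) n^_p times a harmonic number.
   On the left, summing 1/(k - j) over k turns the double sum into
   sum_j a_j H_(n-j), and the substitution p = n - j gives S(m, p) n^_p H_p.
   On the right, the coefficient of S(m, p) is n^_p H_n - sum_k (n-k)^_p / k,
   which equals n^_p H_p by the identity
   sum_(k=1..n) C(n - k, p) / k = C(n, p) (H_n - H_p), which follows by
   induction on n from Pascal's rule. *)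

Lemma stirling2_small m p : m < p -> stirling2 m p = 0.
Proof.
elim: m p => [|m IHm] [|p] //= lt_mp.
by rewrite !IHm ?muln0 // ltnW.
Qed.

Lemma mul_ffact x p : x * x ^_ p = x ^_ p.+1 + p * x ^_ p.
Proof.
rewrite ffactnSr; have [le_px | lt_xp] := leqP p x.
  by rewrite [p * _]mulnC -mulnDr subnK // mulnC.
by rewrite ffact_small // !muln0.
Qed.

Lemma expn_stirling2 x m N :
  m < N -> x ^ m = \sum_(0 <= p < N) stirling2 m p * x ^_ p.
Proof.
elim: m N => [|m IHm] [|N] // lt_mN.
  by rewrite big_nat_recl //= big1.
case: N lt_mN => [//|N] lt_mN.
rewrite expnS (IHm N.+1) // big_distrr [RHS]big_nat_recl //= mul0n add0n.
under eq_big_nat => p _ do rewrite mulnCA mul_ffact mulnDr.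
under [RHS]eq_big_nat => p _ do rewrite [stirling2 _ _]/= mulnDl.
rewrite !big_split /= addnC; congr (_ + _).
rewrite big_nat_recl // mul0n muln0 add0n big_nat_recr //=.
rewrite (@stirling2_small m N.+1) // muln0 mul0n addn0.
by apply: eq_big_nat => p _; rewrite mulnCA !mulnA.
Qed.

Local Open Scope ring_scope.

Lemma harmonic0 : harmonic 0 = 0.
Proof. by rewrite /harmonic big_geq. Qed.

Lemma harmonicS n : harmonic n.+1 = harmonic n + n.+1%:R^-1.
Proof. by rewrite /harmonic big_nat_recr. Qed.

Lemma sum_bin_sub_div n p :
  \sum_(1 <= k < n.+1) 'C(n - k, p)%:R / k%:R
    = 'C(n, p)%:R * (harmonic n - harmonic p) :> rat.
Proof.
elim: n p => [|n IHn] [|p].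
- by rewrite big_geq // harmonic0 subrr mulr0.
- by rewrite big_geq // bin0n mul0r.
- rewrite bin0 mul1r harmonic0 subr0 /harmonic.
  by apply: eq_big_nat => k _; rewrite bin0 mul1r.
rewrite big_nat_recr //= subnn bin0n mul0r addr0.
under eq_big_nat => k /andP[_ lt_kn] do rewrite subSn // binS natrD mulrDl.
rewrite big_split /= !IHn !harmonicS binS natrD.
set a := 'C(n, p.+1)%:R; set b := 'C(n, p)%:R.
have absorb : b / p.+1%:R = (a + b) / n.+1%:R :> rat.
  apply/eqP; rewrite -natrD -binS eqr_div ?pnatr_eq0 // -!natrM.
  by rewrite mulnC (mul_bin_diag n.+1) mulnC.
rewrite [RHS](_ : _ = (a + b) * (harmonic n - (harmonic p + p.+1%:R^-1))
                      + (a + b) / n.+1%:R); last by ring.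
by rewrite -absorb; ring.
Qed.

Lemma sum_ffact_sub_div n p :
  \sum_(1 <= k < n.+1) ((n - k) ^_ p)%:R / k%:R
    = (n ^_ p)%:R * (harmonic n - harmonic p) :> rat.
Proof.
under eq_big_nat => k _ do rewrite -bin_ffact natrM mulrAC.
by rewrite -mulr_suml sum_bin_sub_div -bin_ffact natrM mulrAC.
Qed.

Lemma sum_convolution_harmonic (a : nat -> rat) N :
  \sum_(1 <= k < N.+1) \sum_(0 <= j < k) a j / (k - j)%:R
    = \sum_(0 <= j < N) a j * harmonic (N - j).
Proof.
elim: N => [|N IHN]; first by rewrite !big_geq.
rewrite big_nat_recr //= IHN.
under [RHS]eq_big_nat => j /andP[_ lt_jN].
  rewrite subSn // harmonicS mulrDr -subSn //.
over.
by rewrite big_split /= [in RHS]big_nat_recr //= subnn harmonic0 mulr0 addr0.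
Qed.

Lemma sum_rev_harmonic (f : nat -> rat) n :
  \sum_(0 <= j < n) f (n - j)%N * harmonic (n - j)
    = \sum_(0 <= p < n.+1) f p * harmonic p.
Proof.
rewrite [RHS]big_nat_rev big_nat_recr //= add0n subnn harmonic0 mulr0 addr0.
by apply: eq_big_nat => j _; rewrite subSS.
Qed.

Theorem proposition16 (m n : nat) :
  \sum_(1 <= k < n.+1) \sum_(0 <= j < k)
     (((n - j)`! * 'C(n, j) * stirling2 m (n - j))%:R / (k - j)%:R : rat)
  = (n ^ m)%:R * harmonic n - \sum_(1 <= k < n.+1) ((n - k) ^ m)%:R / k%:R.
Proof.
set N := (m + n).+1; have lt_mN : (m < N)%N by rewrite ltnS leq_addr.
rewrite sum_convolution_harmonic.
under eq_big_nat => j /andP[_ lt_jn].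
  rewrite -(bin_sub (ltnW lt_jn)) [(_ * 'C(_, _))%N]mulnC bin_ffact mulnC.
over.
rewrite (sum_rev_harmonic (fun p => (stirling2 m p * n ^_ p)%:R)).
have widen : \sum_(0 <= p < N) (stirling2 m p * n ^_ p)%:R * harmonic p
              = \sum_(0 <= p < n.+1) (stirling2 m p * n ^_ p)%:R * harmonic p.
  rewrite (big_cat_nat _ (n := n.+1)) ?ltnS ?leq_addl //=.
  rewrite [X in _ + X]big_nat_cond [X in _ + X]big1 ?addr0 //.
  move=> p /andP[/andP[lt_np _] _].
  by rewrite ffact_small // muln0 mul0r.
rewrite -widen (expn_stirling2 n lt_mN) natr_sum mulr_suml.
under [X in _ - X]eq_big_nat => k _.
  rewrite (expn_stirling2 (n - k) lt_mN) natr_sum mulr_suml.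
over.
rewrite exchange_big_nat -sumrB; apply: eq_big_nat => p _.
under eq_big_nat => k _ do rewrite natrM -mulrA.
by rewrite -mulr_sumr sum_ffact_sub_div natrM; ring.
Qed.
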